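(* Let $G$ be a nilpotent group of class $c$ and let $n=\lceil c/2\rceil$. Then the image of the natural homomorphism $\gamma_n(G)\otimes G\to G\otimes G$ (induced by inclusion) is abelian.
   Context: $\gamma_n(G)$ is the $n$-th term of the lower central series. Conventions: ${}^g h = ghg^{-1}$. For $N\trianglelefteq G$, $N\otimes G$ is generated by symbols $x\otimes g$ ($x\in N$, $g\in G$) subject to $xx'\otimes g=({}^x x'\otimes {}^x g)(x\otimes g)$ and $x\otimes gg'=(x\otimes g)({}^g x\otimes {}^g g')$; $G\otimes G$ is the case $N=G$. *)

From Stdlib Require Import List Arith.
Import ListNotations.

Record Grp := {
  carrier :> Type;
  gmul : carrier -> carrier -> carrier;
  gone : carrier;
  ginv : carrier -> carrier;
  gmulA : forall x y z, gmul x (gmul y z) = gmul (gmul x y) z;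
  gmul1l : forall x, gmul gone x = x;
  gmul1r : forall x, gmul x gone = x;
  gmulVl : forall x, gmul (ginv x) x = gone;
  gmulVr : forall x, gmul x (ginv x) = gone
}.

Section GroupDefs.
Variable G : Grp.

(* conjugation convention of the paper: ^g h = g h g^-1 *)
Definition gconj (g h : G) : G := gmul G (gmul G g h) (ginv G g).

Definition gcomm (x y : G) : G :=
  gmul G (gmul G (gmul G x y) (ginv G x)) (ginv G y).

Inductive gen (S : G -> Prop) : G -> Prop :=
| gen_one : gen S (gone G)
| gen_in : forall x, S x -> gen S x
| gen_inv : forall x, gen S x -> gen S (ginv G x)
| gen_mul : forall x y, gen S x -> gen S y -> gen S (gmul G x y).

(* lcs k = gamma_{k+1}(G):  gamma_1 = G, gamma_{i+1} = [gamma_i, G] *)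
Fixpoint lcs (k : nat) : G -> Prop :=
  match k with
  | 0 => fun _ => True
  | S k' => gen (fun z => exists x g, lcs k' x /\ z = gcomm x g)
  end.

(* gamma_n(G), with gamma_0 := G by convention (only relevant for c = 0) *)
Definition gamma (n : nat) : G -> Prop := lcs (n - 1).

Definition trivial_sub (H : G -> Prop) : Prop := forall x, H x -> x = gone G.

Definition nilpotent_class (c : nat) : Prop :=
  trivial_sub (lcs c) /\ (forall d, trivial_sub (lcs d) -> c <= d).

(* Words in the symbols x (x) g and their formal inverses:
   a letter (b, (x, g)) stands for (x (x) g) if b = false and
   (x (x) g)^-1 if b = true. *)
Definition letter := (bool * (G * G))%type.
Definition flip (a : letter) : letter := (negb (fst a), snd a).
Definition sym (x g : G) : letter := (false, (x, g)).

(* The congruence on words defining N (x) G (N a normal subgroup given by a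
   predicate): group axioms (free cancellation) together with the defining
   relations
     x x' (x) g = (^x x' (x) ^x g)(x (x) g),
     x (x) g g' = (x (x) g)(^g x (x) ^g g').                              *)
Inductive tcong (N : G -> Prop) : list letter -> list letter -> Prop :=
| tc_refl : forall w, tcong N w w
| tc_sym : forall u v, tcong N u v -> tcong N v u
| tc_trans : forall u v w, tcong N u v -> tcong N v w -> tcong N u w
| tc_cat : forall u u' v v', tcong N u u' -> tcong N v v' ->
                             tcong N (u ++ v) (u' ++ v')
| tc_cancel : forall a, tcong N [a; flip a] []
| tc_rel1 : forall x x' g, N x -> N x' ->
    tcong N [sym (gmul G x x') g] [sym (gconj x x') (gconj x g); sym x g]
| tc_rel2 : forall x g g', N x ->
    tcong N [sym x (gmul G g g')] [sym x g; sym (gconj g x) (gconj g g')].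

(* words representing elements of N (x) G *)
Definition Nword (N : G -> Prop) (w : list letter) : Prop :=
  Forall (fun a => N (fst (snd a))) w.

(* G (x) G: words modulo tcong (fun _ => True) *)
Definition tsq_eq : list letter -> list letter -> Prop := tcong (fun _ => True).

(* The natural homomorphism N (x) G -> G (x) G induced by inclusion sends the
   class of an N-word w to the class of w in G (x) G.  A word u represents an
   element of its image iff it is tsq_eq-equivalent to some N-word. *)
Definition in_tensor_image (N : G -> Prop) (u : list letter) : Prop :=
  exists w, Nword N w /\ tsq_eq u w.

Definition tensor_image_abelian (N : G -> Prop) : Prop :=
  forall u v, in_tensor_image N u -> in_tensor_image N v ->
    tsq_eq (u ++ v) (v ++ u).

End GroupDefs.

(* In G ⊗ G the element x ⊗ g acts by conjugation as ^[x,g]: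
   (x ⊗ g)(y ⊗ h)(x ⊗ g)^-1 = ^[x,g]y ⊗ ^[x,g]h.  For x, y ∈ γ_n with 2n ≥ c,
   [[x,g], y] ∈ γ_(2n+1) = 1, so it suffices that y ⊗ ^k h = y ⊗ h whenever
   y ∈ γ_i, k ∈ γ_j and i + j > c.  This invariance, together with the vanishing
   of u ⊗ v for u ∈ γ_i, v ∈ γ_j and i + j > c + 1, is proved by downward
   induction on j, using [γ_i, γ_j] ⊆ γ_(i+j) (Hall-Witt) and the expansion
   [x,g] ⊗ v = (x ⊗ g)(^v x ⊗ ^v g)^-1. *)

From Stdlib Require Import List Arith Lia Morphisms.
Import ListNotations.

Section TensorSquare.
Variable G : Grp.
Local Infix "**" := (gmul G) (at level 40, left associativity).
Local Notation one := (gone G).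
Local Notation inv := (ginv G).
Local Notation cj := (gconj G).
Local Notation "[~ x , y ]" := (gcomm G x y).

Lemma ginv_unique x y : x ** y = one -> inv x = y.
Proof. intro H. rewrite <- (gmul1r G (inv x)), <- H, gmulA, gmulVl, gmul1l. reflexivity. Qed.

Lemma ginv_mul x y : inv (x ** y) = inv y ** inv x.
Proof. apply ginv_unique. rewrite <- gmulA, (gmulA G y), gmulVr, gmul1l, gmulVr. reflexivity. Qed.

Lemma ginv_involutive x : inv (inv x) = x.
Proof. apply ginv_unique, gmulVl. Qed.

Lemma ginv_one : inv one = one.
Proof. apply ginv_unique, gmul1l. Qed.

Lemma gmulK x y : inv x ** (x ** y) = y.
Proof. rewrite gmulA, gmulVl, gmul1l. reflexivity. Qed.

Lemma gmulKV x y : x ** (inv x ** y) = y.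
Proof. rewrite gmulA, gmulVr, gmul1l. reflexivity. Qed.

Ltac group_eq :=
  unfold gconj, gcomm;
  repeat first [ rewrite <- gmulA | rewrite ginv_mul | rewrite ginv_involutive
               | rewrite ginv_one | rewrite gmul1l | rewrite gmul1r | rewrite gmulVl
               | rewrite gmulVr | rewrite gmulK | rewrite gmulKV ];
  reflexivity.

Lemma conj_eq_comm_mul a b : cj a b = [~ a, b] ** b.
Proof. group_eq. Qed.

Lemma conj_fixed_of_comm a b : [~ a, b] = one -> cj a b = b.
Proof. intro H. rewrite conj_eq_comm_mul, H, gmul1l. reflexivity. Qed.

(* The Hall-Witt identity for y, g and z := ^(g^-1) a. *)
Lemma comm_comm_hall_witt a y g :
  [~ a, [~ y, g]] =
  [~ [~ g, cj (inv g) a], cj (cj (inv g) a) y] ** [~ [~ cj (inv g) a, y], cj y g].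
Proof. group_eq. Qed.

Lemma lcs_one k : lcs G k one.
Proof. destruct k; [exact I | apply gen_one]. Qed.

Lemma lcs_inv k x : lcs G k x -> lcs G k (inv x).
Proof. destruct k; [auto | apply gen_inv]. Qed.

Lemma lcs_mul k x y : lcs G k x -> lcs G k y -> lcs G k (x ** y).
Proof. destruct k; [auto | apply gen_mul]. Qed.

Lemma lcs_comm_l k x g : lcs G k x -> lcs G (S k) [~ x, g].
Proof. intro Hx. apply gen_in. exists x, g. auto. Qed.

Lemma lcs_comm_r k x g : lcs G k x -> lcs G (S k) [~ g, x].
Proof.
  intro Hx. replace [~ g, x] with (inv [~ x, g]) by group_eq.
  apply lcs_inv, lcs_comm_l, Hx.
Qed.

Lemma lcs_conj k g z : lcs G k z -> lcs G k (cj g z).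
Proof.
  revert g z. induction k as [|k IHk]; intros g z Hz; [exact I|].
  induction Hz as [|z [x [h [Hx ->]]]|z _ IHz|z1 z2 _ IH1 _ IH2].
  - replace (cj g one) with one by group_eq. apply gen_one.
  - apply gen_in. exists (cj g x), (cj g h). split; [apply IHk, Hx | group_eq].
  - replace (cj g (inv z)) with (inv (cj g z)) by group_eq. apply gen_inv, IHz.
  - replace (cj g (z1 ** z2)) with (cj g z1 ** cj g z2) by group_eq. apply gen_mul; auto.
Qed.

Lemma lcs_succ k z : lcs G (S k) z -> lcs G k z.
Proof.
  induction 1 as [|z [x [h [Hx ->]]]|z _ IHz|z1 z2 _ IH1 _ IH2].
  - apply lcs_one.
  - replace [~ x, h] with (x ** cj h (inv x)) by group_eq.
    apply lcs_mul; [exact Hx | apply lcs_conj, lcs_inv, Hx].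
  - apply lcs_inv, IHz.
  - apply lcs_mul; auto.
Qed.

Lemma lcs_le a b z : b <= a -> lcs G a z -> lcs G b z.
Proof. induction 1; auto. intro Hz. apply IHle, lcs_succ, Hz. Qed.

Lemma lcs_comm i j a b : lcs G i a -> lcs G j b -> lcs G (i + j + 1) [~ a, b].
Proof.
  revert i a b. induction j as [|j IHj]; intros i a b Ha Hb.
  - apply (lcs_le (S i)); [lia | apply lcs_comm_l, Ha].
  - induction Hb as [|z [y [g [Hy ->]]]|z _ IHz|z1 z2 _ IH1 _ IH2].
    + replace [~ a, one] with one by group_eq. apply lcs_one.
    + assert (Hw : lcs G i (cj (inv g) a)) by (apply lcs_conj, Ha).
      rewrite comm_comm_hall_witt. apply lcs_mul.
      * apply (lcs_le (S i + j + 1)); [lia|].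
        apply IHj; [apply lcs_comm_r, Hw | apply lcs_conj, Hy].
      * apply (lcs_le (S (i + j + 1))); [lia|]. apply lcs_comm_l, IHj; auto.
    + replace [~ a, inv z] with (cj (inv z) (inv [~ a, z])) by group_eq.
      apply lcs_conj, lcs_inv, IHz.
    + replace [~ a, z1 ** z2] with ([~ a, z1] ** cj z1 [~ a, z2]) by group_eq.
      apply lcs_mul; [|apply lcs_conj]; auto.
Qed.

Local Notation "u ≡ v" := (tsq_eq G u v) (at level 70).
Local Notation "x ⊗ g" := (sym G x g) (at level 45).
Local Notation fl := (flip G).

#[local] Instance tsq_eq_equiv : Equivalence (tsq_eq G).
Proof. split; [exact (tc_refl G _) | exact (tc_sym G _) | exact (tc_trans G _)]. Qed.

#[local] Instance tsq_eq_app : Proper (tsq_eq G ==> tsq_eq G ==> tsq_eq G) (@app (letter G)).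
Proof. intros u u' Hu v v' Hv. apply tc_cat; assumption. Qed.

#[local] Instance tsq_eq_cons : Proper (eq ==> tsq_eq G ==> tsq_eq G) (@cons (letter G)).
Proof. intros a _ <- v v' Hv. apply (tc_cat _ _ [a] [a] v v'); [reflexivity | exact Hv]. Qed.

Lemma flip_flip a : fl (fl a) = a.
Proof. destruct a as [b p]. unfold flip. simpl. rewrite Bool.negb_involutive. reflexivity. Qed.

Lemma cancel_r a v : a :: fl a :: v ≡ v.
Proof. apply (tc_cat _ _ [a; fl a] [] v v); [apply tc_cancel | reflexivity]. Qed.

Lemma cancel_l a v : fl a :: a :: v ≡ v.
Proof. rewrite <- (flip_flip a) at 2. apply cancel_r. Qed.

Definition word_inv (w : list (letter G)) : list (letter G) := rev (map fl w).

Lemma word_mul_inv w : w ++ word_inv w ≡ [].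
Proof.
  induction w as [|a w IHw]; [reflexivity|].
  unfold word_inv. cbn [map rev]. rewrite app_assoc, <- app_comm_cons.
  fold (word_inv w). rewrite IHw. apply cancel_r.
Qed.

Lemma word_inv_involutive w : word_inv (word_inv w) = w.
Proof.
  unfold word_inv. rewrite map_rev, map_map, rev_involutive.
  erewrite map_ext; [apply map_id | apply flip_flip].
Qed.

Lemma word_inv_mul w : word_inv w ++ w ≡ [].
Proof. rewrite <- (word_inv_involutive w) at 2. apply word_mul_inv. Qed.

Lemma move_r u w v : u ++ w ≡ v -> u ≡ v ++ word_inv w.
Proof. intro H. rewrite <- H, <- app_assoc, word_mul_inv, app_nil_r. reflexivity. Qed.

Lemma move_l w u v : w ++ u ≡ v -> u ≡ word_inv w ++ v.
Proof. intro H. rewrite <- H, app_assoc, word_inv_mul. reflexivity. Qed.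

Lemma word_inv_congr u v : u ≡ v -> word_inv u ≡ word_inv v.
Proof.
  intro H. transitivity (word_inv u ++ v ++ word_inv v).
  - rewrite word_mul_inv, app_nil_r. reflexivity.
  - rewrite app_assoc, <- H at 1. rewrite word_inv_mul. reflexivity.
Qed.

Lemma app_cancel_l w u v : w ++ u ≡ w ++ v -> u ≡ v.
Proof. intro H. apply move_l in H. rewrite H, app_assoc, word_inv_mul. reflexivity. Qed.

Lemma app_cancel_r w u v : u ++ w ≡ v ++ w -> u ≡ v.
Proof.
  intro H. apply move_r in H. rewrite H, <- app_assoc, word_mul_inv, app_nil_r. reflexivity.
Qed.

Lemma cons_congr a u w : [a] ≡ u -> a :: w ≡ u ++ w.
Proof. intro H. change (a :: w) with ([a] ++ w). rewrite H. reflexivity. Qed.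

Lemma flip_congr a b : [a] ≡ [b] -> [fl a] ≡ [fl b].
Proof. apply word_inv_congr. Qed.

Lemma tensor_mul_l u x x' g y z w : u = x ** x' -> y = cj x x' -> z = cj x g ->
  u ⊗ g :: w ≡ y ⊗ z :: x ⊗ g :: w.
Proof. intros -> -> ->. apply (cons_congr _ [_; _]), tc_rel1; exact I. Qed.

Lemma tensor_mul_r x v g g' y z w : v = g ** g' -> y = cj g x -> z = cj g g' ->
  x ⊗ v :: w ≡ x ⊗ g :: y ⊗ z :: w.
Proof. intros -> -> ->. apply (cons_congr _ [_; _]), tc_rel2; exact I. Qed.

Lemma letter_idem a : [a] ≡ [a; a] -> [a] ≡ [].
Proof. intro H. apply (app_cancel_r [a] [a] []). symmetry. exact H. Qed.

Lemma tensor_one_l v : [one ⊗ v] ≡ [].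
Proof. apply letter_idem, (tensor_mul_l _ one one); group_eq. Qed.

Lemma tensor_one_r x : [x ⊗ one] ≡ [].
Proof. apply letter_idem, (tensor_mul_r _ _ one one); group_eq. Qed.

Lemma tensor_inv_l x v z w : z = cj (inv x) v -> inv x ⊗ v :: w ≡ fl (x ⊗ z) :: w.
Proof.
  intros ->. apply (cons_congr _ [_]), (move_l [x ⊗ cj (inv x) v] _ []).
  cbn [app]. rewrite <- (tensor_mul_l one (inv x) x v x (cj (inv x) v)) by group_eq.
  apply tensor_one_l.
Qed.

(* Expand (x a) ⊗ (g b) in the two possible orders. *)
Lemma tensor_conj_swap x g a b :
  [x ⊗ g; cj (g ** x) a ⊗ cj (g ** x) b] ≡ [cj (x ** g) a ⊗ cj (x ** g) b; x ⊗ g].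
Proof.
  apply (app_cancel_r [cj g x ⊗ cj g b]), (app_cancel_l [cj x a ⊗ cj x g]).
  transitivity [(x ** a) ⊗ (g ** b)].
  - rewrite (tensor_mul_r (x ** a) (g ** b) g b (cj g (x ** a)) (cj g b)) by reflexivity.
    rewrite (tensor_mul_l (x ** a) x a g (cj x a) (cj x g)) by reflexivity.
    rewrite (tensor_mul_l (cj g (x ** a)) (cj g x) (cj g a) (cj g b)
               (cj (g ** x) a) (cj (g ** x) b)) by group_eq.
    reflexivity.
  - rewrite (tensor_mul_l (x ** a) x a (g ** b) (cj x a) (cj x (g ** b))) by reflexivity.
    rewrite (tensor_mul_r (cj x a) (cj x (g ** b)) (cj x g) (cj x b)
               (cj (x ** g) a) (cj (x ** g) b)) by group_eq.
    rewrite (tensor_mul_r x (g ** b) g b (cj g x) (cj g b)) by reflexivity.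
    reflexivity.
Qed.

Lemma tensor_conj_comm x g y h :
  [x ⊗ g; y ⊗ h] ≡ [cj [~ x, g] y ⊗ cj [~ x, g] h; x ⊗ g].
Proof.
  replace y with (cj (g ** x) (cj (inv (g ** x)) y)) at 1 by group_eq.
  replace h with (cj (g ** x) (cj (inv (g ** x)) h)) at 1 by group_eq.
  rewrite tensor_conj_swap.
  replace (cj (x ** g) (cj (inv (g ** x)) y)) with (cj [~ x, g] y) by group_eq.
  replace (cj (x ** g) (cj (inv (g ** x)) h)) with (cj [~ x, g] h) by group_eq.
  reflexivity.
Qed.

Lemma tensor_comm_l x g v :
  [[~ x, g] ⊗ v] ≡ [x ⊗ g; fl (cj v x ⊗ cj v g)].
Proof.
  assert (Hv : [x ⊗ v] ≡ [x ⊗ g; cj g x ⊗ v; fl (cj v x ⊗ cj v g)]).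
  { apply (move_r [x ⊗ v] [cj v x ⊗ cj v g] [x ⊗ g; cj g x ⊗ v]).
    transitivity [x ⊗ (v ** g)].
    - symmetry. apply (tensor_mul_r _ _ v g); reflexivity.
    - apply (tensor_mul_r _ _ g (cj (inv g) v)); group_eq. }
  assert (Hk : [fl (cj [~ x, g] (cj g x) ⊗ cj [~ x, g] v)]
                 ≡ [x ⊗ g; fl (cj g x ⊗ v); fl (x ⊗ g)]).
  { rewrite <- (flip_flip (x ⊗ g)) at 1.
    apply (word_inv_congr [_] [x ⊗ g; cj g x ⊗ v; fl (x ⊗ g)]).
    apply (move_r _ [x ⊗ g] [x ⊗ g; cj g x ⊗ v]). symmetry. apply tensor_conj_comm. }
  rewrite (tensor_mul_l [~ x, g] x (cj g (inv x)) v (inv (cj [~ x, g] (cj g x))) (cj x v))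
    by group_eq.
  rewrite (tensor_inv_l _ _ (cj [~ x, g] v)) by group_eq.
  rewrite Hv, (cons_congr _ _ _ Hk). cbn [app].
  rewrite cancel_l, cancel_l. reflexivity.
Qed.

Definition letters_commute (a b : letter G) : Prop := [a; b] ≡ [b; a].

Lemma letters_commute_sym a b : letters_commute a b -> letters_commute b a.
Proof. unfold letters_commute. intro H. symmetry. exact H. Qed.

Lemma letters_commute_flip a b : letters_commute a b -> letters_commute (fl a) b.
Proof.
  unfold letters_commute. intro H. apply (app_cancel_l [a]). cbn [app].
  rewrite cancel_r. change [a; b; fl a] with ([a; b] ++ [fl a]).
  rewrite H. cbn [app]. rewrite cancel_r. reflexivity.
Qed.

Lemma letter_cases (a : letter G) :
  a = fst (snd a) ⊗ snd (snd a) \/ a = fl (fst (snd a) ⊗ snd (snd a)).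
Proof. destruct a as [[|] [x g]]; [right | left]; reflexivity. Qed.

Lemma letter_word_commute a v :
  (forall b, In b v -> letters_commute a b) -> a :: v ≡ v ++ [a].
Proof.
  induction v as [|b v IHv]; intro Hv; [reflexivity|].
  apply (tc_trans _ _ _ ([b; a] ++ v)).
  - apply (tc_cat _ _ [a; b] [b; a] v v); [apply Hv; left; reflexivity | reflexivity].
  - cbn [app]. rewrite IHv by (intros; apply Hv; right; assumption). reflexivity.
Qed.

Lemma words_commute u v :
  (forall a b, In a u -> In b v -> letters_commute a b) -> u ++ v ≡ v ++ u.
Proof.
  induction u as [|a u IHu]; intro Huv.
  - rewrite app_nil_r. reflexivity.
  - cbn [app]. rewrite IHu by (intros; apply Huv; [right|]; assumption).
    rewrite app_comm_cons, letter_word_commute, <- app_assoc by (intros; apply Huv; [left|]; auto).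
    reflexivity.
Qed.

Lemma tensor_image_abelian_of_commute (N : G -> Prop) :
  (forall x g y h, N x -> N y -> letters_commute (x ⊗ g) (y ⊗ h)) ->
  tensor_image_abelian G N.
Proof.
  intros Hcomm u v [u' [Hu' Hu]] [v' [Hv' Hv]].
  unfold tsq_eq in *. rewrite Hu, Hv. apply words_commute.
  intros a b Ha Hb.
  apply (proj1 (Forall_forall _ _) Hu') in Ha. apply (proj1 (Forall_forall _ _) Hv') in Hb.
  destruct (letter_cases a) as [-> | ->], (letter_cases b) as [-> | ->];
    auto using letters_commute_sym, letters_commute_flip.
Qed.

Section Nilpotent.
Variable c : nat.
Hypothesis lcs_c_trivial : trivial_sub G (lcs G c).

Lemma lcs_trivial p z : c <= p -> lcs G p z -> z = one.
Proof. intros Hp Hz. apply lcs_c_trivial, (lcs_le p); assumption. Qed.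

Lemma conj_fixed i j a b : c <= i + j + 1 -> lcs G i a -> lcs G j b -> cj a b = b.
Proof.
  intros Hij Ha Hb. apply conj_fixed_of_comm, (lcs_trivial (i + j + 1)); auto using lcs_comm.
Qed.

Definition lcs_tensor_trivial q : Prop :=
  forall p u v, c <= p + q -> lcs G p u -> lcs G q v -> [u ⊗ v] ≡ [].

Definition lcs_conj_invariant q : Prop :=
  forall p x v g, c <= p + q + 1 -> lcs G p x -> lcs G q v -> [x ⊗ cj v g] ≡ [x ⊗ g].

Lemma tensor_comm_trivial q p x h v : lcs_conj_invariant q ->
  c <= p + q + 1 -> lcs G p x -> lcs G q v -> [[~ x, h] ⊗ v] ≡ [].
Proof.
  intros Hinv Hpq Hx Hv.
  rewrite tensor_comm_l, (conj_fixed q p v x), (flip_congr _ _ (Hinv p x v h Hpq Hx Hv))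
    by (assumption || lia).
  apply cancel_r.
Qed.

Lemma lcs_tensor_trivial_of_conj_invariant q :
  lcs_conj_invariant q -> lcs_tensor_trivial q.
Proof.
  intros Hinv [|p] u v Hpq Hu Hv.
  { rewrite (lcs_trivial q v) by (assumption || lia). apply tensor_one_r. }
  (* Conjugates are needed in the product case: x x' ⊗ v = (^x x' ⊗ v)(x ⊗ v). *)
  enough (Hconj : forall w, [cj w u ⊗ v] ≡ []).
  { specialize (Hconj one). replace (cj one u) with u in Hconj by group_eq. exact Hconj. }
  induction Hu as [|z [x [h [Hx ->]]]|z Hz IHz|z1 z2 Hz1 IH1 Hz2 IH2]; intro w.
  - replace (cj w one) with one by group_eq. apply tensor_one_l.
  - replace (cj w [~ x, h]) with [~ cj w x, cj w h] by group_eq.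
    apply (tensor_comm_trivial q p); auto using lcs_conj; lia.
  - replace (cj w (inv z)) with (inv (cj w z)) by group_eq.
    rewrite (tensor_inv_l _ _ v) by
      (symmetry; apply (conj_fixed (S p) q); auto using lcs_inv, lcs_conj; lia).
    exact (word_inv_congr [_] [] (IHz w)).
  - rewrite (tensor_mul_l _ (cj w z1) (cj w z2) v (cj (cj w z1 ** w) z2) v)
      by (group_eq || (symmetry; apply (conj_fixed (S p) q); auto using lcs_conj; lia)).
    rewrite (cons_congr _ _ _ (IH2 _)), IH1. reflexivity.
Qed.

Lemma lcs_conj_invariant_ge q : c <= q -> lcs_conj_invariant q.
Proof.
  intros Hq p x v g _ _ Hv. rewrite (lcs_trivial q v Hq Hv).
  replace (cj one g) with g by group_eq. reflexivity.
Qed.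

(* Write ^v g = [v, g] g and use that [v, g] lies one step deeper in the series. *)
Lemma lcs_conj_invariant_pred q : lcs_conj_invariant (S q) -> lcs_conj_invariant q.
Proof.
  intros Hinv p x v g Hpq Hx Hv.
  assert (Hvg : lcs G (S q) [~ v, g]) by (apply lcs_comm_l, Hv).
  assert (Hfix : cj [~ v, g] x = x) by (apply (conj_fixed (S q) p); auto; lia).
  rewrite (tensor_mul_r x (cj v g) [~ v, g] g x (cj [~ v, g] g))
    by first [reflexivity | apply conj_eq_comm_mul | symmetry; exact Hfix].
  rewrite (Hinv p x [~ v, g] g) by (assumption || lia).
  rewrite (cons_congr _ _ _ (lcs_tensor_trivial_of_conj_invariant _ Hinv p x [~ v, g]
                               ltac:(lia) Hx Hvg)).
  reflexivity.
Qed.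

Lemma lcs_conj_invariant_all q : lcs_conj_invariant q.
Proof.
  remember (c - q) as n eqn:Hn. revert q Hn.
  induction n as [|n IHn]; intros q Hn.
  - apply lcs_conj_invariant_ge. lia.
  - apply lcs_conj_invariant_pred, IHn. lia.
Qed.

Lemma lcs_tensors_commute m x g y h : c <= m + m + 2 -> lcs G m x -> lcs G m y ->
  letters_commute (x ⊗ g) (y ⊗ h).
Proof.
  intros Hm Hx Hy. unfold letters_commute.
  rewrite tensor_conj_comm, (conj_fixed (S m) m [~ x, g] y) by (auto using lcs_comm_l; lia).
  apply (cons_congr _ [y ⊗ h] [x ⊗ g]), (lcs_conj_invariant_all (S m) m);
    auto using lcs_comm_l; lia.
Qed.

End Nilpotent.
End TensorSquare.

Theorem lemma5p1 (G : Grp) (c : nat) :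
  nilpotent_class G c ->
  tensor_image_abelian G (gamma G ((c + 1) / 2)).
Proof.
  intros [Hc _]. apply tensor_image_abelian_of_commute.
  intros x g y h. apply lcs_tensors_commute with c; [exact Hc|].
  pose proof (Nat.div_mod (c + 1) 2). pose proof (Nat.mod_upper_bound (c + 1) 2). lia.
Qed.
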